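(* Let $N$ be a finite $\Lambda$-module with $|N/(1-t)N|=l$. Then there exists a finite $\Lambda$-module $M$ containing $N$ as a $\Lambda$-submodule such that $|M/N|=l$ and $(1-t)M=N$.
   Context: $\Lambda=\mathbb Z[t,t^{-1}]$, the ring of Laurent polynomials over $\mathbb Z$. A $\Lambda$-module is an abelian group with an automorphism by which $t$ acts. *)

From HB Require Import structures.
From mathcomp Require Import all_boot all_order all_algebra all_fingroup.
Set Implicit Arguments. Unset Strict Implicit. Unset Printing Implicit Defensive.
Import GRing.Theory.
Local Open Scope ring_scope.

(* A finite Lambda-module (Lambda = Z[t,t^-1]) is a finite abelian group V
   (finZmodType) together with an additive automorphism t : V -> V. *)

Definition one_minus_t_image (V : finZmodType) (t : V -> V) : {set V} :=
  [set x - t x | x in [set: V]].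

From HB Require Import structures.
From mathcomp Require Import all_boot all_order all_algebra all_fingroup.
From mathcomp Require Import zify.
Import GRing.Theory.
Set Implicit Arguments. Unset Strict Implicit. Unset Printing Implicit Defensive.
Local Open Scope ring_scope.

(* Write K = (1 - t)N.  We prove the more general statement that
   for every additive subgroup L of N containing K there is a finite
   Lambda-module M >= N with (1 - s)M = L and |M| |K| = |N| |L|; the theorem
   is the case L = N, the index formula following from Lagrange's theorem.
   The general statement is proved by induction on |L| - |K|.  If L = K take
   M = N.  Otherwise pick x in L \ K, let d > 1 be the order of x modulo K and
   write d x = (1 - t) k0.  Adjoin to N a new element y with d y = k0 and
   s y = y - x: the resulting module N1 = N x Z/d (with carry k0) has
   |N1| = d |N| and (1 - s)N1 = K + {0, x, ..., (d-1) x}, a subgroup of L of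
   order d |K|.  The induction hypothesis applied to N1 and the image of L
   then yields M. *)

Section AdditiveSubgroups.
Variable V : finZmodType.

Definition subzmod (A : {set V}) := 0 \in A /\ {in A &, forall a b, a - b \in A}.

Lemma subzmodN (A : {set V}) : subzmod A -> {in A, forall a, - a \in A}.
Proof. by move=> [A0 AB] a aA; rewrite -sub0r AB. Qed.

Lemma subzmodD (A : {set V}) : subzmod A -> {in A &, forall a b, a + b \in A}.
Proof. by move=> [A0 AB] a b aA bA; rewrite -[b]opprK AB ?subzmodN. Qed.

Lemma subzmodMn (A : {set V}) (a : V) (m : nat) : subzmod A -> a \in A -> a *+ m \in A.
Proof.
move=> Asub aA; elim: m => [|m IHm]; first by rewrite mulr0n; case: Asub.
by rewrite mulrS subzmodD.
Qed.

Lemma subzmodT : subzmod [set: V].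
Proof. by split=> [|a b _ _]; rewrite inE. Qed.

Lemma card_subzmod_gt0 (A : {set V}) : subzmod A -> (0 < #|A|)%N.
Proof. by move=> [A0 _]; apply/card_gt0P; exists 0. Qed.

Lemma subzmod_Lagrange (A : {set V}) :
  subzmod A -> (#|A| * (#|[set: V] : A|)%g)%N = #|V|.
Proof.
move=> Asub; have gA : group_set A.
  by apply/group_setP; split=> [|a b aA bA]; [case: Asub | exact: subzmodD].
by rewrite -cardsT (Lagrange (subsetT (Group gA))).
Qed.

Definition add_multiples (K : {set V}) (x : V) (d : nat) : {set V} :=
  [set k + x *+ (nat_of_ord j) | k in K, j in [set: 'I_d]].

Section OrderModulo.
Variables (K : {set V}) (x : V) (d : nat).
Hypotheses (Ksub : subzmod K) (d_min : forall m, (0 < m < d)%N -> x *+ m \notin K).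

Lemma multiples_distinct_mod (i j : 'I_d) : x *+ i - x *+ j \in K -> i = j.
Proof.
wlog le_ji : i j / (j <= i)%N.
  move=> wlogH; case: (leqP j i) => [|/ltnW le_ij]; first exact: wlogH.
  by move=> ijK; apply/esym/wlogH; rewrite // -opprB subzmodN.
rewrite -mulrnBr // => ijK; apply: ord_inj; case: (posnP (i - j)%N) => [|pos]; first lia.
have := @d_min (i - j)%N; rewrite pos ijK (leq_ltn_trans (leq_subr _ _)) ?ltn_ord //.
by move/(_ isT).
Qed.

Lemma card_add_multiples : #|add_multiples K x d| = (#|K| * d)%N.
Proof.
rewrite /add_multiples curry_imset2X card_in_imset ?cardsX ?cardsT ?card_ord //.
move=> [k j] [k' j'] /setXP[kK _] /setXP[k'K _] /= eq_sum.
have eq_j : j = j'.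
  apply: multiples_distinct_mod; have -> : x *+ j - x *+ j' = k' - k.
    by rewrite -[x *+ j](addKr k) eq_sum addrA addrK addrC.
  by case: Ksub => _ ->.
by move: eq_sum; rewrite eq_j => /addIr ->.
Qed.

End OrderModulo.

Lemma order_modulo_exists (K : {set V}) (x : V) : subzmod K -> x \notin K ->
  exists2 d, (1 < d)%N & x *+ d \in K /\ forall m, (0 < m < d)%N -> x *+ m \notin K.
Proof.
move=> Ksub xK.
have exP : exists m, (0 < m)%N && (x *+ m \in K).
  exists #[x]%g; rewrite order_gt0 -FinRing.zmodXgE expg_order; by case: Ksub.
case: (ex_minnP exP) => d /andP[d_gt0 xdK] d_min.
exists d; last split => // m /andP[m_gt0 lt_md].
  by case: d d_gt0 xdK {d_min} => [|[|d]] //; rewrite mulr1n (negbTE xK).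
by apply/negP => xmK; have := d_min m; rewrite m_gt0 xmK leqNgt lt_md => /(_ isT).
Qed.

Lemma add_multiples_sub (K L : {set V}) (x : V) (d : nat) :
  subzmod L -> K \subset L -> x \in L -> add_multiples K x d \subset L.
Proof.
move=> Lsub KL xL; apply/subsetP => _ /imset2P[k j kK _ ->].
by rewrite (subzmodD Lsub) ?(subzmodMn _ Lsub) // (subsetP KL).
Qed.

End AdditiveSubgroups.

Lemma subzmod_image (V W : finZmodType) (f : {additive V -> W}) (A : {set V}) :
  subzmod A -> subzmod (f @: A).
Proof.
move=> [A0 AB]; split; first by apply/imsetP; exists 0; rewrite ?raddf0.
move=> _ _ /imsetP[a aA ->] /imsetP[b bA ->].
by apply/imsetP; exists (a - b); rewrite ?AB ?raddfB.
Qed.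

Lemma subzmod_one_minus_t_image (V : finZmodType) (t : {additive V -> V}) :
  subzmod (one_minus_t_image t).
Proof. exact: (subzmod_image (idfun \- t) (@subzmodT V)). Qed.

(* Adjoining a d-th "root" y of k0 to N: the group N x Z/d in which
   (a, i) stands for a + i y and additions carry d y = k0. *)
Section AdjoinRoot.
Variables (N : finZmodType) (d' : nat) (k0 : N).
Local Notation d := d'.+1.

Definition adjoin (k : N) : Type := (N * 'I_d)%type.
Local Notation N1 := (adjoin k0).
HB.instance Definition _ := Finite.on N1.

Definition adjoin_add (p q : N1) : N1 :=
  (p.1 + q.1 + k0 *+ ((p.2 + q.2) %/ d), inZp (p.2 + q.2)).
Definition adjoin_opp (p : N1) : N1 :=
  (- p.1 - k0 *+ (0 < p.2)%N, inZp (d - p.2)).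
Definition adjoin_zero : N1 := (0, ord0).

Lemma adjoin_addA : associative adjoin_add.
Proof.
have carry a b : (a %/ d + (b + a %% d) %/ d = (b + a) %/ d)%N.
  by rewrite {3}(divn_eq a d) addnCA divnMDl.
move=> [a i] [b j] [c k]; rewrite /adjoin_add /=; congr (_, _).
  rewrite -!addrA; congr (_ + _); congr (_ + _); rewrite [RHS]addrCA; congr (_ + _).
  rewrite -!mulrnDr (carry (j + k)%N i) [((i + j) %% d + k)%N]addnC.
  by rewrite (carry (i + j)%N k) addnA addnC.
by apply: val_inj => /=; rewrite modnDmr modnDml addnA.
Qed.

Lemma adjoin_addC : commutative adjoin_add.
Proof. by move=> [a i] [b j]; rewrite /adjoin_add /= addnC (addrC a). Qed.

Lemma adjoin_add0 : left_id adjoin_zero adjoin_add.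
Proof.
move=> [a i]; rewrite /adjoin_add /= add0n add0r divn_small // addr0.
by congr (_, _); apply: val_inj; rewrite /= modn_small.
Qed.

Lemma adjoin_addN : left_inverse adjoin_zero adjoin_opp adjoin_add.
Proof.
move=> [a [[|i] lt_id]]; rewrite /adjoin_add /adjoin_opp /=.
  rewrite subn0 modnn addn0 div0n addr0 subr0 addNr.
  by congr (_, _); apply: val_inj.
rewrite modn_small ?subnK ?ltn_subrL // ?(ltnW lt_id) // divnn /= addrAC subrK addNr.
by congr (_, _); apply: val_inj; rewrite /= modnn.
Qed.

HB.instance Definition _ :=
  GRing.isZmodule.Build N1 adjoin_addA adjoin_addC adjoin_add0 adjoin_addN.

Lemma adjoin_sub_same (a b : N) (j : 'I_d) :
  ((a, j) : N1) - ((b, j) : N1) = ((a - b, ord0) : N1).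
Proof.
rewrite /GRing.add /GRing.opp /= /adjoin_add /adjoin_opp /=; congr (_, _); last first.
  by apply: val_inj => /=; rewrite modnDmr subnKC ?modnn // ltnW.
case: j => [[|j] lt_jd] /=; first by rewrite subn0 modnn addn0 div0n subr0 addr0.
by rewrite modn_small ?subnKC ?divnn ?ltn_subrL ?(ltnW lt_jd) // addrA subrK.
Qed.

Definition adjoin_inj (a : N) : N1 := (a, ord0).

Lemma adjoin_inj_is_nmod : nmod_morphism adjoin_inj.
Proof.
split=> // a b; rewrite /adjoin_inj /GRing.add /= /adjoin_add /= addr0.
by congr (_, _); apply: val_inj.
Qed.
HB.instance Definition _ := GRing.isNmodMorphism.Build N N1 adjoin_inj adjoin_inj_is_nmod.

Lemma adjoin_inj_injective : injective adjoin_inj.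
Proof. by move=> a b [->]. Qed.

Lemma card_adjoin : #|(N1 : finType)| = (#|N| * d)%N.
Proof. by rewrite card_prod card_ord. Qed.

Variables (t : {additive N -> N}) (x : N).
Hypothesis hk : k0 - t k0 = x *+ d.

(* The automorphism extending t with s y = y - x; it is well defined because
   (1 - t) k0 = d x.  It takes hk as an argument so that its additive
   structure, which needs hk, can be declared canonically. *)
Definition adjoin_t (_ : k0 - t k0 = x *+ d) (p : N1) : N1 := (t p.1 - x *+ p.2, p.2).
Local Notation s := (adjoin_t hk).

Lemma adjoin_t_is_nmod : nmod_morphism s.
Proof.
split; first by rewrite /s /= raddf0 subr0.
move=> [a i] [b j]; rewrite /s /GRing.add /= /adjoin_add /=; congr (_, _).
rewrite !raddfD /= raddfMn /= addrACA -opprD -mulrnDr.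
have -> : x *+ (i + j) = (k0 - t k0) *+ ((i + j) %/ d) + x *+ ((i + j) %% d).
  by rewrite hk -mulrnA mulnC -mulrnDr -divn_eq.
rewrite mulrnBl; move: (t a) (t b) (k0 *+ _) (t k0 *+ _) (x *+ _) => A B C D E.
by rewrite opprD opprB -[RHS]addrA [D - C - E + C]addrAC subrK !addrA.
Qed.
HB.instance Definition _ := GRing.isNmodMorphism.Build N1 N1 s adjoin_t_is_nmod.

Lemma adjoin_t_bij : bijective t -> bijective s.
Proof.
move=> /bij_inj t_inj; apply: injF_bij => -[a i] [b j] [+ eq_ij].
by rewrite eq_ij => /addIr/t_inj ->.
Qed.

Lemma adjoin_inj_t (a : N) : adjoin_inj (t a) = s (adjoin_inj a).
Proof. by rewrite /adjoin_inj /s /= subr0. Qed.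

Lemma adjoin_one_minus_t_image :
  one_minus_t_image s = adjoin_inj @: add_multiples (one_minus_t_image t) x d.
Proof.
have sub_s a (j : 'I_d) : ((a, j) : N1) - s (a, j) = adjoin_inj (a - t a + x *+ j).
  by rewrite adjoin_sub_same opprB addrA addrAC.
apply/setP => y; apply/imsetP/imsetP.
  case=> -[a j] _ ->; exists (a - t a + x *+ j); rewrite ?sub_s //.
  by apply/imset2P; exists (a - t a) j => //; apply/imsetP; exists a.
case=> _ /imset2P[_ j /imsetP[a _ ->] _ ->] ->.
by exists (a, j); rewrite ?sub_s.
Qed.

End AdjoinRoot.

Lemma adjoin_root (N : finZmodType) (t : {additive N -> N}) (x k0 : N) (d : nat) :
  bijective t -> (0 < d)%N -> k0 - t k0 = x *+ d ->
  exists (N1 : finZmodType) (t1 : {additive N1 -> N1}) (i1 : {additive N -> N1}),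
    [/\ bijective t1, injective i1, (forall a, i1 (t a) = t1 (i1 a)),
        #|N1| = (#|N| * d)%N
      & one_minus_t_image t1 = i1 @: add_multiples (one_minus_t_image t) x d].
Proof.
case: d => // d' t_bij _ hk.
exists (adjoin d' k0), (adjoin_t hk), (adjoin_inj d' k0); split.
- exact: adjoin_t_bij.
- exact: adjoin_inj_injective.
- exact: adjoin_inj_t.
- exact: card_adjoin.
- exact: adjoin_one_minus_t_image.
Qed.

Definition extends_onto (N : finZmodType) (t : {additive N -> N}) (L : {set N}) :=
  exists (M : finZmodType) (s : {additive M -> M}) (i : {additive N -> M}),
    [/\ bijective s, injective i, (forall a, i (t a) = s (i a)),
        (#|M| * #|one_minus_t_image t| = #|N| * #|L|)%N
      & one_minus_t_image s = i @: L].

Lemma extends_onto_refl (N : finZmodType) (t : {additive N -> N}) :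
  bijective t -> extends_onto t (one_minus_t_image t).
Proof. by move=> t_bij; exists N, t, idfun; split; rewrite ?imset_id. Qed.

Lemma extends_onto_through (N N1 : finZmodType) (t : {additive N -> N})
    (t1 : {additive N1 -> N1}) (i1 : {additive N -> N1}) (K1 L : {set N}) :
  injective i1 -> (forall a, i1 (t a) = t1 (i1 a)) ->
  one_minus_t_image t1 = i1 @: K1 ->
  (#|N1| * #|one_minus_t_image t| = #|N| * #|K1|)%N ->
  extends_onto t1 (i1 @: L) -> extends_onto t L.
Proof.
move=> i1_inj i1_t img1 card1 [M [s [i [s_bij i_inj i_t cardM imgM]]]].
exists M, s, (i \o i1); split => //.
- by move=> a b /i_inj /i1_inj.
- by move=> a /=; rewrite i1_t i_t.
- have K1_gt0 : (0 < #|K1|)%N.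
    rewrite -(card_imset _ i1_inj) -img1.
    exact: card_subzmod_gt0 (subzmod_one_minus_t_image t1).
  move: cardM; rewrite img1 !(card_imset _ i1_inj) => cardM.
  apply/eqP; rewrite -(eqn_pmul2r K1_gt0) mulnAC cardM mulnAC card1.
  by rewrite mulnAC.
- by rewrite imgM -imset_comp.
Qed.

Lemma extends_onto_subzmod (n : nat) (N : finZmodType) (t : {additive N -> N})
    (L : {set N}) :
  bijective t -> subzmod L -> one_minus_t_image t \subset L ->
  (#|L| - #|one_minus_t_image t| <= n)%N -> extends_onto t L.
Proof.
elim: n N t L => [|n IHn] N t L t_bij Lsub KL size_L.
  have -> // : L = one_minus_t_image t; last exact: extends_onto_refl.
  by apply/eqP; rewrite eq_sym eqEcard KL -subn_eq0 -leqn0.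
have Ksub := subzmod_one_minus_t_image t.
have [LK|/subsetPn[x xL xK]] := boolP (L \subset one_minus_t_image t).
  have -> : L = one_minus_t_image t by apply/eqP; rewrite eqEsubset LK.
  exact: extends_onto_refl.
have [d d_gt1 [/imsetP[k0 _ hk] d_min]] := order_modulo_exists Ksub xK.
have [N1 [t1 [i1 [t1_bij i1_inj i1_t card1 img1]]]] :=
  adjoin_root t_bij (ltnW d_gt1) (esym hk).
have card_K1 := card_add_multiples Ksub d_min.
apply: (extends_onto_through i1_inj i1_t img1).
  by rewrite card1 card_K1 mulnA mulnAC.
apply: IHn => //; first exact: subzmod_image.
  by rewrite img1 imsetS ?add_multiples_sub.
have size_L1 : (#|L| - #|one_minus_t_image t| * d <= n)%N.
  have : (#|one_minus_t_image t| * 2 <= #|one_minus_t_image t| * d)%N.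
    by rewrite leq_mul2l d_gt1 orbT.
  by have := card_subzmod_gt0 Ksub; lia.
by rewrite img1 !(card_imset _ i1_inj) card_K1.
Qed.

Theorem theorem4p3 (N : finZmodType) (t : {additive N -> N}) (t_bij : bijective t)
    (l : nat) (hl : (#|[set: N] : one_minus_t_image t|)%g = l) :
  exists (M : finZmodType) (s : {additive M -> M}) (i : {additive N -> M}),
    [/\ bijective s,
        injective i,
        (forall x : N, i (t x) = s (i x)),
        (#|[set: M] : i @: [set: N]|)%g = l
      & one_minus_t_image s = i @: [set: N]].
Proof.
have Ksub := subzmod_one_minus_t_image t.
have [|M [s [i [s_bij i_inj i_t cardM imgM]]]] :=
  extends_onto_subzmod (n := #|N|) t_bij (@subzmodT N) (subsetT _).
  by rewrite cardsT leq_subr.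
exists M, s, i; split => //; subst l.
have K_index := subzmod_Lagrange Ksub.
have M_index : (#|N| * (#|[set: M] : i @: [set: N]|)%g)%N = #|M|.
  rewrite -cardsT -(card_imset _ i_inj).
  exact: subzmod_Lagrange (subzmod_image i (@subzmodT N)).
have NK_gt0 : (0 < #|N| * #|one_minus_t_image t|)%N.
  by rewrite muln_gt0 card_subzmod_gt0 // andbT; apply/card_gt0P; exists 0%R.
apply/eqP; rewrite -(eqn_pmul2l NK_gt0) mulnAC M_index cardM.
by rewrite -mulnA K_index cardsT.
Qed.
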